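(* Let $\phi,\chi,\psi$ be Dirichlet characters of conductors $h,k,q$ respectively, and let $a,b$ be positive integers forming an admissible index (i.e. such that all the limits and series below converge). Assume $\phi\chi\psi(-1)=(-1)^{a+b+1}$. Then $$\tau(\overline{\phi})\,\tau(\overline{\chi})\,\tau(\overline{\psi})\,L(0,a,b\,;\phi,\chi,\psi)=\sum_{j=1}^{h-1}\sum_{l=1}^{k-1}\sum_{r=1}^{q-1}\overline{\phi}(j)\,\overline{\chi}(l)\,\overline{\psi}(r)\,U\!\left(a,b\,;\tfrac{j}{h}+\tfrac{r}{q},\tfrac{l}{k}+\tfrac{r}{q}\right).$$
   Context: For real $x,y$, $T(0,a,b\,;x,y):=\lim_{R\to\infty}\sum_{m,n\ge1,\ m+n\le R}\frac{e^{2\pi i m x}e^{2\pi i n y}}{n^a (m+n)^b}$ (the Lerch type Tornheim double zeta function at $(0,a,b)$), and $U$ is defined by $2U(a,b\,;x,y):=T(0,a,b\,;x,y)-(-1)^{a+b}T(0,a,b\,;-x,-y)$. Further, $$L(0,a,b\,;\phi,\chi,\psi):=\lim_{R\to\infty}\sum_{m,n\ge1,\ m+n\le R}\frac{\phi(m)\chi(n)\psi(m+n)}{n^a(m+n)^b},$$ and for a character $\chi$ of conductor $k$ the Gauss sum is $\tau(\chi):=\sum_{l=1}^{k-1}\chi(l)e^{2\pi i l/k}$. *)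

From Stdlib Require Import Reals ZArith Znumtheory.
From Coquelicot Require Import Coquelicot.
Open Scope R_scope.

Definition e2pi (t : R) : C := (cos (2 * PI * t), sin (2 * PI * t)).

Definition is_dirichlet_char (k : Z) (chi : Z -> C) : Prop :=
  (0 < k)%Z /\
  (forall n : Z, chi (n + k)%Z = chi n) /\
  (forall m n : Z, chi (m * n)%Z = Cmult (chi m) (chi n)) /\
  chi 1%Z = RtoC 1 /\
  (forall n : Z, chi n = RtoC 0 <-> Z.gcd n k <> 1%Z).

Definition is_primitive (k : Z) (chi : Z -> C) : Prop :=
  forall d : Z, (0 < d)%Z -> Z.divide d k -> (d < k)%Z ->
    exists n : Z, Z.modulo n d = Z.modulo 1 d /\ Z.gcd n k = 1%Z /\ chi n <> RtoC 1.

Definition has_conductor (k : Z) (chi : Z -> C) : Prop :=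
  is_dirichlet_char k chi /\ is_primitive k chi.

Definition char_conj (chi : Z -> C) : Z -> C := fun n => Cconj (chi n).

Definition gauss_sum (k : nat) (chi : Z -> C) : C :=
  sum_n_m (fun l : nat => Cmult (chi (Z.of_nat l)) (e2pi (INR l / INR k))) 1 (k - 1).

Definition tri_sum (R0 : nat) (f : nat -> nat -> C) : C :=
  sum_n_m (fun m : nat =>
    sum_n_m (fun n : nat => if (m + n <=? R0)%nat then f m n else RtoC 0) 1 R0) 1 R0.

Definition T_partial (a b : nat) (x y : R) (R0 : nat) : C :=
  tri_sum R0 (fun m n =>
    Cdiv (Cmult (e2pi (INR m * x)) (e2pi (INR n * y)))
         (RtoC (INR n ^ a * INR (m + n) ^ b))).

Definition L_partial (a b : nat) (phi chi psi : Z -> C) (R0 : nat) : C :=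
  tri_sum R0 (fun m n =>
    Cdiv (Cmult (Cmult (phi (Z.of_nat m)) (chi (Z.of_nat n))) (psi (Z.of_nat (m + n))))
         (RtoC (INR n ^ a * INR (m + n) ^ b))).

Definition is_T (a b : nat) (x y : R) (t : C) : Prop :=
  filterlim (T_partial a b x y) eventually (locally t).

Definition is_L (a b : nat) (phi chi psi : Z -> C) (v : C) : Prop :=
  filterlim (L_partial a b phi chi psi) eventually (locally v).

Definition U_of (a b : nat) (T : R -> R -> C) (x y : R) : C :=
  Cmult (RtoC (/ 2))
    (Cminus (T x y) (Cmult (RtoC ((-1) ^ (a + b))) (T (- x) (- y)))).

From Stdlib Require Import Reals ZArith Znumtheory Lia Lra List Permutation.
From Coquelicot Require Import Coquelicot.
Open Scope R_scope.

(* For a primitive character of conductor [k] the Gauss sum separates: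
   [tau(conj chi) chi(n) = sum_l conj chi(l) e(n l / k)].  Applied to
   [phi(m) chi(n) psi(m + n)] this produces [e(m x) e(n y)] with
   [x = j/h + r/q], [y = l/k + r/q], so summing over the triangle [m + n <= R]
   identifies [tau tau tau L] with [sum conj(phi chi psi)(j, l, r) T(x, y)].
   The substitution [(j, l, r) |-> (h - j, k - l, q - r)] shows that the same
   sum with [T(-x, -y)] is [conj(phi chi psi (-1)) = (-1)^(a+b+1)] times it,
   and then the combination defining [U] reproduces it exactly. *)

(* Coquelicot's lemmas on [sum_n_m], specialized to [C] so that they can
   rewrite terms built from [Cplus] and [Cmult]. *)
Lemma Csum_mult_l (a : C) (u : nat -> C) n m :
  sum_n_m (fun i => Cmult a (u i)) n m = Cmult a (sum_n_m u n m).
Proof. exact (sum_n_m_mult_l a u n m). Qed.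

Lemma Csum_mult_r (a : C) (u : nat -> C) n m :
  sum_n_m (fun i => Cmult (u i) a) n m = Cmult (sum_n_m u n m) a.
Proof. exact (sum_n_m_mult_r a u n m). Qed.

Lemma Csum_plus (u v : nat -> C) n m :
  sum_n_m (fun i => Cplus (u i) (v i)) n m = Cplus (sum_n_m u n m) (sum_n_m v n m).
Proof. exact (sum_n_m_plus u v n m). Qed.

Lemma Csum_zero n m : sum_n_m (fun _ => RtoC 0) n m = RtoC 0.
Proof. exact (@sum_n_m_const_zero C_AbelianMonoid n m). Qed.

Lemma Csum_empty (u : nat -> C) n m : (m < n)%nat -> sum_n_m u n m = RtoC 0.
Proof. exact (sum_n_m_zero u n m). Qed.

Lemma Csum_Sn (u : nat -> C) n m :
  (n <= m)%nat -> sum_n_m u n m = Cplus (u n) (sum_n_m u (S n) m).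
Proof. exact (sum_Sn_m u n m). Qed.

Lemma Csum_nS (u : nat -> C) n m :
  (n <= S m)%nat -> sum_n_m u n (S m) = Cplus (sum_n_m u n m) (u (S m)).
Proof. exact (sum_n_Sm u n m). Qed.

Lemma Csum_ext (u v : nat -> C) n m :
  (forall i, (n <= i <= m)%nat -> u i = v i) -> sum_n_m u n m = sum_n_m v n m.
Proof. exact (sum_n_m_ext_loc u v n m). Qed.

Lemma Csum_exchange (f : nat -> nat -> C) a b c d :
  sum_n_m (fun i => sum_n_m (fun j => f i j) a b) c d =
  sum_n_m (fun j => sum_n_m (fun i => f i j) c d) a b.
Proof.
  destruct (Nat.lt_ge_cases d c) as [Hdc|Hcd].
  { rewrite Csum_empty by exact Hdc. rewrite <- (Csum_zero a b).
    apply Csum_ext; intros. now rewrite Csum_empty. }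
  induction Hcd as [|d Hcd IH].
  - rewrite sum_n_n. apply Csum_ext; intros. now rewrite sum_n_n.
  - rewrite Csum_nS, IH, <- Csum_plus by lia.
    apply Csum_ext; intros. rewrite Csum_nS by lia. reflexivity.
Qed.

Lemma Csum_reflect (f : nat -> C) a b :
  sum_n_m f a b = sum_n_m (fun j => f (a + b - j)%nat) a b.
Proof.
  destruct (Nat.lt_ge_cases b a) as [Hba|Hab].
  { now rewrite !Csum_empty. }
  replace b with (a + (b - a))%nat by lia. generalize (b - a)%nat as n. intros n; clear Hab b.
  revert a. induction n as [|n IH]; intros a.
  - rewrite Nat.add_0_r, !sum_n_n. f_equal; lia.
  - rewrite (Csum_Sn f) by lia.
    replace (a + S n)%nat with (S a + n)%nat by lia. rewrite (IH (S a)).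
    replace (S a + n)%nat with (S (a + n)) by lia.
    rewrite <- sum_n_m_S.
    rewrite (Csum_nS (fun j => f (a + S (a + n) - j)%nat)) by lia.
    replace (a + S (a + n) - S (a + n))%nat with a by lia.
    rewrite Cplus_comm. f_equal.
Qed.

Lemma filterlim_Cmult_l (f : nat -> C) (c x : C) :
  filterlim f eventually (locally x) ->
  filterlim (fun n => Cmult c (f n)) eventually (locally (Cmult c x)).
Proof.
  intros Hf. eapply filterlim_comp; [exact Hf |].
  exact (@filterlim_scal_r C_AbsRing C_NormedModule c x).
Qed.

Lemma filterlim_Cplus (f g : nat -> C) (x y : C) :
  filterlim f eventually (locally x) -> filterlim g eventually (locally y) ->
  filterlim (fun n => Cplus (f n) (g n)) eventually (locally (Cplus x y)).
Proof.
  intros Hf Hg. eapply filterlim_comp_2; [exact Hf | exact Hg |].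
  exact (@filterlim_plus C_AbsRing C_NormedModule x y).
Qed.

Lemma filterlim_C_unique (f : nat -> C) (x y : C) :
  filterlim f eventually (locally x) -> filterlim f eventually (locally y) -> x = y.
Proof. exact (@filterlim_locally_unique _ C_AbsRing C_NormedModule _ _ f x y). Qed.

Lemma filterlim_Csum (f : nat -> nat -> C) (v : nat -> C) a b :
  (forall i, (a <= i <= b)%nat -> filterlim (f i) eventually (locally (v i))) ->
  filterlim (fun n => sum_n_m (fun i => f i n) a b) eventually (locally (sum_n_m v a b)).
Proof.
  destruct (Nat.lt_ge_cases b a) as [Hba|Hab].
  { intros _. rewrite Csum_empty by exact Hba.
    eapply filterlim_ext; [| apply filterlim_const]. intros; now rewrite Csum_empty. }
  induction Hab as [|b Hab IH]; intros H.
  - rewrite sum_n_n.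
    eapply filterlim_ext; [| apply H; lia]. intros; now rewrite sum_n_n.
  - rewrite Csum_nS by lia.
    eapply filterlim_ext; [| apply filterlim_Cplus; [apply IH | apply H]];
      [| intros; apply H; lia | lia].
    intros; now rewrite Csum_nS by lia.
Qed.

Lemma e2pi_add s t : e2pi (s + t) = Cmult (e2pi s) (e2pi t).
Proof.
  unfold e2pi. replace (2 * PI * (s + t)) with (2 * PI * s + 2 * PI * t) by ring.
  rewrite cos_plus, sin_plus. unfold Cmult; simpl. f_equal; ring.
Qed.

Lemma e2pi_add_INR t (n : nat) : e2pi (t + INR n) = e2pi t.
Proof.
  unfold e2pi. replace (2 * PI * (t + INR n)) with (2 * PI * t + 2 * INR n * PI) by ring.
  now rewrite cos_period, sin_period.
Qed.

Lemma e2pi_add_IZR t (z : Z) : e2pi (t + IZR z) = e2pi t.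
Proof.
  destruct (Z_le_gt_dec 0 z).
  - rewrite <- (Z2Nat.id z), <- INR_IZR_INZ by lia. apply e2pi_add_INR.
  - rewrite <- (e2pi_add_INR (t + IZR z) (Z.to_nat (- z))). f_equal.
    rewrite INR_IZR_INZ, Z2Nat.id, opp_IZR by lia. ring.
Qed.

Definition lsum (l : list C) : C := fold_right Cplus (RtoC 0) l.

Lemma lsum_perm l1 l2 : Permutation l1 l2 -> lsum l1 = lsum l2.
Proof.
  induction 1; unfold lsum in *; simpl; [reflexivity | congruence | ring | congruence].
Qed.

Lemma lsum_mult_l {A} (a : C) (g : A -> C) l :
  lsum (map (fun z => Cmult a (g z)) l) = Cmult a (lsum (map g l)).
Proof. induction l; unfold lsum in *; simpl; [ring | rewrite IHl; ring]. Qed.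

Lemma lsum_ext {A} (f g : A -> C) l :
  (forall z, In z l -> f z = g z) -> lsum (map f l) = lsum (map g l).
Proof. intros H. f_equal. now apply map_ext_in. Qed.

Lemma lsum_seq (G : nat -> C) s n : lsum (map G (seq s (S n))) = sum_n_m G s (s + n).
Proof.
  revert s. induction n as [|n IH]; intros s.
  - rewrite Nat.add_0_r, sum_n_n. unfold lsum; simpl. ring.
  - change (lsum (map G (seq s (S (S n)))))
      with (Cplus (G s) (lsum (map G (seq (S s) (S n))))).
    rewrite IH, (Csum_Sn G s) by lia. do 2 f_equal. lia.
Qed.

Lemma lsum_RtoC {A} (g : A -> R) l :
  lsum (map (fun z => RtoC (g z)) l) = RtoC (fold_right Rplus 0 (map g l)).
Proof.
  induction l; unfold lsum in *; simpl; [reflexivity |].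
  rewrite IHl. unfold Cplus, RtoC; simpl. f_equal; ring.
Qed.

Lemma fold_right_Rplus_ge_In {A} (g : A -> R) l x :
  (forall y, 0 <= g y) -> In x l -> g x <= fold_right Rplus 0 (map g l).
Proof.
  intros Hg. induction l as [|y l IH]; simpl; [tauto |].
  assert (0 <= fold_right Rplus 0 (map g l)).
  { clear IH. induction l; simpl; [lra | pose proof (Hg a); lra]. }
  intros [<- | Hx]; [lra |]. pose proof (IH Hx). pose proof (Hg y). lra.
Qed.

Definition residues (k : nat) : list Z := map Z.of_nat (seq 0 k).

Lemma in_residues k z : In z (residues k) <-> (0 <= z < Z.of_nat k)%Z.
Proof.
  unfold residues. rewrite in_map_iff. split.
  - intros [n [<- Hn]]. apply in_seq in Hn. lia.
  - intros H. exists (Z.to_nat z). split; [lia | apply in_seq; lia].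
Qed.

Lemma NoDup_residues k : NoDup (residues k).
Proof.
  apply NoDup_map_NoDup_ForallPairs; [intros x y _ _; lia | apply seq_NoDup].
Qed.

Lemma residues_mul_perm (k : nat) (c : Z) :
  (0 < Z.of_nat k)%Z -> Z.gcd c (Z.of_nat k) = 1%Z ->
  Permutation (map (fun z => (c * z) mod Z.of_nat k)%Z (residues k)) (residues k).
Proof.
  intros Hk Hc. apply NoDup_Permutation_bis.
  - apply NoDup_map_NoDup_ForallPairs; [| apply NoDup_residues].
    intros x y Hx Hy Hxy. apply in_residues in Hx, Hy.
    assert (Hd : (Z.of_nat k | c * (x - y))%Z).
    { apply Z.mod_divide; [lia |].
      rewrite Z.mul_sub_distr_l, Zminus_mod, Hxy, Z.sub_diag. reflexivity. }
    apply Gauss in Hd; [| now apply rel_prime_sym, Zgcd_1_rel_prime].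
    destruct Hd as [t Ht].
    assert (t < 1)%Z by nia. assert (-1 < t)%Z by nia. assert (t = 0)%Z by lia. subst. lia.
  - rewrite length_map. lia.
  - intros w Hw. apply in_map_iff in Hw. destruct Hw as [z [<- _]].
    apply in_residues, Z.mod_pos_bound. lia.
Qed.

Lemma periodic_add_mul (K : Z) (F : Z -> C) :
  (forall z, F (z + K)%Z = F z) -> forall z t, F (z + t * K)%Z = F z.
Proof.
  intros HF.
  assert (Hnat : forall z (n : nat), F (z + Z.of_nat n * K)%Z = F z).
  { intros z n. induction n as [|n IH]; [f_equal; lia |].
    rewrite <- IH, <- (HF (z + Z.of_nat n * K)%Z). f_equal.
    rewrite Nat2Z.inj_succ. ring. }
  intros z t. destruct (Z_le_gt_dec 0 t).
  - rewrite <- (Z2Nat.id t) by lia. apply Hnat.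
  - rewrite <- (Hnat (z + t * K)%Z (Z.to_nat (- t))). f_equal.
    rewrite Z2Nat.id by lia. ring.
Qed.

Lemma lsum_residues_mul (k : nat) (c : Z) (F : Z -> C) :
  (0 < Z.of_nat k)%Z -> Z.gcd c (Z.of_nat k) = 1%Z ->
  (forall z, F (z + Z.of_nat k)%Z = F z) ->
  lsum (map F (residues k)) = lsum (map (fun z => F (c * z)%Z) (residues k)).
Proof.
  intros Hk Hc HF.
  rewrite <- (lsum_perm _ _ (Permutation_map F (residues_mul_perm k c Hk Hc))), map_map.
  apply lsum_ext. intros z _.
  rewrite (Z.mod_eq (c * z) (Z.of_nat k)) by lia.
  replace (c * z - Z.of_nat k * (c * z / Z.of_nat k))%Z
    with (c * z + (- (c * z / Z.of_nat k)) * Z.of_nat k)%Z by ring.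
  apply (periodic_add_mul _ F HF).
Qed.

Lemma Cconj_RtoC (r : R) : Cconj (RtoC r) = RtoC r.
Proof. unfold Cconj, RtoC; simpl. f_equal; ring. Qed.

Lemma Cmult_reg_l (x u v : C) : x <> RtoC 0 -> Cmult x u = Cmult x v -> u = v.
Proof.
  intros Hx E. rewrite <- (Cmult_1_l u), <- (Cmult_1_l v), <- (Cinv_l x Hx),
    <- !Cmult_assoc, E. reflexivity.
Qed.

Section DirichletCharacter.

Variables (k : nat) (chi : Z -> C).
Hypothesis Hchi : has_conductor (Z.of_nat k) chi.

Lemma conductor_pos : (0 < Z.of_nat k)%Z.
Proof. apply Hchi. Qed.

Lemma char_periodic z : chi (z + Z.of_nat k)%Z = chi z.
Proof. apply Hchi. Qed.

Lemma char_mult m n : chi (m * n)%Z = Cmult (chi m) (chi n).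
Proof. apply Hchi. Qed.

Lemma char_1 : chi 1%Z = RtoC 1.
Proof. apply Hchi. Qed.

Lemma char_eq0 n : chi n = RtoC 0 <-> Z.gcd n (Z.of_nat k) <> 1%Z.
Proof. apply Hchi. Qed.

Lemma char_reflect j :
  (j <= k)%nat -> chi (Z.of_nat (k - j)) = Cmult (chi (-1)%Z) (chi (Z.of_nat j)).
Proof.
  intros Hj. rewrite Nat2Z.inj_sub by exact Hj.
  replace (Z.of_nat k - Z.of_nat j)%Z with ((-1) * Z.of_nat j + Z.of_nat k)%Z by ring.
  rewrite char_periodic. apply char_mult.
Qed.

Hypothesis Hk : (2 <= k)%nat.

Lemma char_0 : chi 0%Z = RtoC 0.
Proof. apply char_eq0. rewrite Z.gcd_0_l. lia. Qed.

(* Values at units have modulus 1: multiplying by [n] permutes the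
   residues, so [P = |chi n|^2 P] for [P = sum |chi z|^2], and [P >= |chi 1|^2 = 1]. *)
Lemma char_mul_conj n :
  Z.gcd n (Z.of_nat k) = 1%Z -> Cmult (chi n) (Cconj (chi n)) = RtoC 1.
Proof.
  intros Hn.
  set (P := lsum (map (fun z => Cmult (chi z) (Cconj (chi z))) (residues k))).
  assert (HP : P = Cmult (Cmult (chi n) (Cconj (chi n))) P).
  { unfold P at 1.
    rewrite (lsum_residues_mul k n) by
      (try apply conductor_pos; try exact Hn; intros; now rewrite char_periodic).
    unfold P. rewrite <- lsum_mult_l. apply lsum_ext; intros.
    rewrite char_mult, Cmult_conj. ring. }
  assert (HP0 : P <> RtoC 0).
  { unfold P. rewrite (lsum_ext _ (fun z => RtoC (Cmod (chi z) ^ 2)))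
      by (intros; now rewrite Cmod2_conj).
    rewrite lsum_RtoC.
    assert (H1 : Cmod (chi 1%Z) ^ 2 <=
                 fold_right Rplus 0 (map (fun z => Cmod (chi z) ^ 2) (residues k))).
    { apply (fold_right_Rplus_ge_In (fun z => Cmod (chi z) ^ 2));
        [intros; apply pow2_ge_0 | apply in_residues; lia]. }
    rewrite char_1, Cmod_1 in H1. set (s := fold_right Rplus 0 _) in *.
    intros E. injection E as E. lra. }
  apply (Cmult_reg_l P); [exact HP0 |]. now rewrite Cmult_1_r, Cmult_comm, <- HP.
Qed.

Definition gauss_sum_at (n : Z) : C :=
  lsum (map (fun z => Cmult (Cconj (chi z)) (e2pi (IZR z * IZR n / IZR (Z.of_nat k))))
            (residues k)).

Lemma IZR_conductor_neq0 : IZR (Z.of_nat k) <> 0.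
Proof. apply not_0_IZR. lia. Qed.

Lemma gauss_sum_at_mul c n :
  Z.gcd c (Z.of_nat k) = 1%Z -> gauss_sum_at n = Cmult (Cconj (chi c)) (gauss_sum_at (c * n)).
Proof.
  intros Hc. unfold gauss_sum_at.
  rewrite (lsum_residues_mul k c); [| apply conductor_pos | exact Hc |].
  - rewrite <- lsum_mult_l. apply lsum_ext; intros z _.
    replace (IZR (c * z) * IZR n / IZR (Z.of_nat k))
      with (IZR z * IZR (c * n) / IZR (Z.of_nat k))
      by (rewrite !mult_IZR; field; apply IZR_conductor_neq0).
    rewrite char_mult, Cmult_conj. ring.
  - intros z. rewrite char_periodic, plus_IZR. f_equal.
    rewrite <- (e2pi_add_IZR (IZR z * IZR n / IZR (Z.of_nat k)) n). f_equal.
    field. apply IZR_conductor_neq0.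
Qed.

(* For [n] not coprime to [k], primitivity yields [c = 1 mod k/gcd(n,k)] with
   [chi c <> 1]; multiplication by [c] fixes the additive character [z |-> e(zn/k)]. *)
Lemma gauss_sum_at_noncoprime n : Z.gcd n (Z.of_nat k) <> 1%Z -> gauss_sum_at n = RtoC 0.
Proof.
  intros Hn. set (g := Z.gcd n (Z.of_nat k)).
  pose proof conductor_pos as Hk0.
  assert (Hg : g <> 0%Z) by (intros E; apply Z.gcd_eq_0 in E; lia).
  pose proof (Z.gcd_nonneg n (Z.of_nat k)) as Hg0; fold g in Hg0.
  destruct (Z.gcd_divide_r n (Z.of_nat k)) as [d Hd]; fold g in Hd.
  destruct (Z.gcd_divide_l n (Z.of_nat k)) as [v Hv]; fold g in Hv.
  assert (Hd0 : (0 < d)%Z) by nia.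
  assert (HdK : (d < Z.of_nat k)%Z) by nia.
  destruct Hchi as [_ Hprim].
  destruct (Hprim d Hd0 (ex_intro _ g (eq_trans Hd (Z.mul_comm d g))) HdK)
    as [c [Hc1 [Hc2 Hc3]]].
  assert (Hu : (c - 1 = d * (c / d - 1 / d))%Z).
  { pose proof (Z.div_mod c d). pose proof (Z.div_mod 1 d). lia. }
  set (u := (c / d - 1 / d)%Z) in Hu.
  assert (Hfix : gauss_sum_at n = Cmult (Cconj (chi c)) (gauss_sum_at n)).
  { rewrite (gauss_sum_at_mul c n) at 1 by exact Hc2. f_equal.
    unfold gauss_sum_at. apply lsum_ext; intros z _. f_equal.
    rewrite <- (e2pi_add_IZR (IZR z * IZR n / IZR (Z.of_nat k)) (z * u * v)). f_equal.
    replace (c * n)%Z with (n + (c - 1) * n)%Z by ring. rewrite Hu, Hv.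
    replace (Z.of_nat k) with (d * g)%Z by lia.
    rewrite !plus_IZR, !mult_IZR. field. split; apply not_0_IZR; lia. }
  assert (Hc : Cminus (RtoC 1) (Cconj (chi c)) <> RtoC 0).
  { intros E. apply Hc3.
    assert (Hw : Cconj (chi c) = RtoC 1).
    { transitivity (Cminus (RtoC 1) (Cminus (RtoC 1) (Cconj (chi c)))); [ring |].
      rewrite E. ring. }
    now rewrite <- (Cconj_conj (chi c)), Hw, Cconj_RtoC. }
  apply (Cmult_reg_l _ _ _ Hc). rewrite Cmult_0_r.
  transitivity (Cminus (gauss_sum_at n) (Cmult (Cconj (chi c)) (gauss_sum_at n))); [ring |].
  rewrite <- Hfix. ring.
Qed.

Lemma gauss_sum_at_char n : gauss_sum_at n = Cmult (chi n) (gauss_sum_at 1).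
Proof.
  destruct (Z.eq_dec (Z.gcd n (Z.of_nat k)) 1) as [Hn|Hn].
  - rewrite (gauss_sum_at_mul n 1), Z.mul_1_r, Cmult_assoc, char_mul_conj by exact Hn.
    ring.
  - rewrite gauss_sum_at_noncoprime by exact Hn.
    apply char_eq0 in Hn. rewrite Hn. ring.
Qed.

Lemma gauss_sum_at_INR (m : nat) : gauss_sum_at (Z.of_nat m) =
  sum_n_m (fun l => Cmult (Cconj (chi (Z.of_nat l))) (e2pi (INR m * (INR l / INR k)))) 1 (k - 1).
Proof.
  unfold gauss_sum_at, residues. rewrite map_map.
  replace (seq 0 k) with (seq 0 (S (k - 1))) by (f_equal; lia).
  rewrite lsum_seq, (Csum_Sn _ 0) by lia. simpl (0 + _)%nat.
  change (Z.of_nat 0) with 0%Z. rewrite char_0, Cconj_RtoC, Cmult_0_l, Cplus_0_l.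
  apply Csum_ext; intros l _. do 2 f_equal.
  rewrite <- !INR_IZR_INZ. field. apply not_0_INR. lia.
Qed.

End DirichletCharacter.

Lemma gauss_sum_conj_mul_char (k : nat) (chi : Z -> C) (m : nat) :
  has_conductor (Z.of_nat k) chi ->
  Cmult (gauss_sum k (char_conj chi)) (chi (Z.of_nat m)) =
  sum_n_m (fun l => Cmult (Cconj (chi (Z.of_nat l))) (e2pi (INR m * (INR l / INR k)))) 1 (k - 1).
Proof.
  intros Hchi. destruct (Nat.lt_ge_cases k 2) as [Hk|Hk].
  { unfold gauss_sum. rewrite !Csum_empty by lia. ring. }
  rewrite <- gauss_sum_at_INR, (gauss_sum_at_char k chi Hchi Hk), Cmult_comm by assumption.
  f_equal. change 1%Z with (Z.of_nat 1). rewrite gauss_sum_at_INR by assumption.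
  apply Csum_ext; intros. unfold char_conj. do 2 f_equal. simpl. ring.
Qed.

Lemma tri_sum_ext R0 f g : (forall m n, f m n = g m n) -> tri_sum R0 f = tri_sum R0 g.
Proof.
  intros H. unfold tri_sum. apply Csum_ext; intros. apply Csum_ext; intros. now rewrite H.
Qed.

Lemma tri_sum_mult_l R0 a f :
  Cmult a (tri_sum R0 f) = tri_sum R0 (fun m n => Cmult a (f m n)).
Proof.
  unfold tri_sum. rewrite <- Csum_mult_l. apply Csum_ext; intros.
  rewrite <- Csum_mult_l. apply Csum_ext; intros. destruct (_ <=? _)%nat; ring.
Qed.

Lemma tri_sum_Csum R0 (g : nat -> nat -> nat -> C) a b :
  tri_sum R0 (fun m n => sum_n_m (fun j => g j m n) a b) =
  sum_n_m (fun j => tri_sum R0 (g j)) a b.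
Proof.
  unfold tri_sum.
  transitivity (sum_n_m (fun m => sum_n_m (fun n => sum_n_m (fun j =>
    if (m + n <=? R0)%nat then g j m n else RtoC 0) a b) 1 R0) 1 R0).
  { apply Csum_ext; intros. apply Csum_ext; intros.
    destruct (_ <=? _)%nat; [reflexivity | now rewrite Csum_zero]. }
  rewrite <- (Csum_exchange (fun m j => sum_n_m (fun n =>
    if (m + n <=? R0)%nat then g j m n else RtoC 0) 1 R0)).
  apply Csum_ext; intros. apply Csum_exchange.
Qed.

Lemma T_partial_add_IZR a b x y (u v : Z) R0 :
  T_partial a b (x + IZR u) (y + IZR v) R0 = T_partial a b x y R0.
Proof.
  unfold T_partial. apply tri_sum_ext; intros m n.
  replace (INR m * (x + IZR u)) with (INR m * x + IZR (Z.of_nat m * u))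
    by (rewrite mult_IZR, <- INR_IZR_INZ; ring).
  replace (INR n * (y + IZR v)) with (INR n * y + IZR (Z.of_nat n * v))
    by (rewrite mult_IZR, <- INR_IZR_INZ; ring).
  now rewrite !e2pi_add_IZR.
Qed.

Lemma is_T_add_IZR a b x y (u v : Z) t :
  is_T a b x y t -> is_T a b (x + IZR u) (y + IZR v) t.
Proof.
  intros H. eapply filterlim_ext; [| exact H]. intros. symmetry. apply T_partial_add_IZR.
Qed.

Definition triple_sum (h k q : nat) (F : nat -> nat -> nat -> C) : C :=
  sum_n_m (fun j => sum_n_m (fun l => sum_n_m (fun r => F j l r)
    1 (q - 1)) 1 (k - 1)) 1 (h - 1).

Section TripleSum.

Variables h k q : nat.

Lemma triple_sum_ext (F G : nat -> nat -> nat -> C) :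
  (forall j l r, (1 <= j <= h - 1)%nat -> (1 <= l <= k - 1)%nat -> (1 <= r <= q - 1)%nat ->
    F j l r = G j l r) ->
  triple_sum h k q F = triple_sum h k q G.
Proof.
  intros H. unfold triple_sum.
  apply Csum_ext; intros. apply Csum_ext; intros. apply Csum_ext; intros. auto.
Qed.

Lemma triple_sum_lin (al be : C) (F G : nat -> nat -> nat -> C) :
  triple_sum h k q (fun j l r => Cplus (Cmult al (F j l r)) (Cmult be (G j l r))) =
  Cplus (Cmult al (triple_sum h k q F)) (Cmult be (triple_sum h k q G)).
Proof.
  assert (Hlin : forall (f g : nat -> C) n m,
    sum_n_m (fun i => Cplus (Cmult al (f i)) (Cmult be (g i))) n m =
    Cplus (Cmult al (sum_n_m f n m)) (Cmult be (sum_n_m g n m))).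
  { intros. now rewrite Csum_plus, !Csum_mult_l. }
  unfold triple_sum. rewrite <- Hlin.
  apply Csum_ext; intros. rewrite <- Hlin. apply Csum_ext; intros. apply Hlin.
Qed.

Lemma triple_sum_prod (A B D : nat -> C) (x : C) :
  Cmult (Cmult (Cmult (sum_n_m A 1 (h - 1)) (sum_n_m B 1 (k - 1))) (sum_n_m D 1 (q - 1))) x =
  triple_sum h k q (fun j l r => Cmult (Cmult (Cmult (A j) (B l)) (D r)) x).
Proof.
  unfold triple_sum.
  transitivity (sum_n_m (fun j => Cmult (A j)
    (Cmult (Cmult (sum_n_m B 1 (k - 1)) (sum_n_m D 1 (q - 1))) x)) 1 (h - 1)).
  { rewrite Csum_mult_r. ring. }
  apply Csum_ext; intros j _.
  transitivity (sum_n_m (fun l => Cmult (B l)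
    (Cmult (A j) (Cmult (sum_n_m D 1 (q - 1)) x))) 1 (k - 1)).
  { rewrite Csum_mult_r. ring. }
  apply Csum_ext; intros l _.
  transitivity (sum_n_m (fun r => Cmult (Cmult (Cmult (A j) (B l)) x) (D r)) 1 (q - 1)).
  { rewrite Csum_mult_l. ring. }
  apply Csum_ext; intros. ring.
Qed.

Lemma tri_sum_triple_sum R0 (g : nat -> nat -> nat -> nat -> nat -> C) :
  tri_sum R0 (fun m n => triple_sum h k q (fun j l r => g j l r m n)) =
  triple_sum h k q (fun j l r => tri_sum R0 (g j l r)).
Proof.
  unfold triple_sum. rewrite tri_sum_Csum. apply Csum_ext; intros.
  rewrite tri_sum_Csum. apply Csum_ext; intros. apply tri_sum_Csum.
Qed.

Lemma filterlim_triple_sum (f : nat -> nat -> nat -> nat -> C) (v : nat -> nat -> nat -> C) :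
  (forall j l r, (1 <= j <= h - 1)%nat -> (1 <= l <= k - 1)%nat -> (1 <= r <= q - 1)%nat ->
    filterlim (f j l r) eventually (locally (v j l r))) ->
  filterlim (fun n => triple_sum h k q (fun j l r => f j l r n)) eventually
    (locally (triple_sum h k q v)).
Proof.
  intros H. apply filterlim_Csum; intros. apply filterlim_Csum; intros.
  apply filterlim_Csum; intros. auto.
Qed.

Lemma triple_sum_reflect (F : nat -> nat -> nat -> C) :
  triple_sum h k q F = triple_sum h k q (fun j l r => F (h - j) (k - l) (q - r))%nat.
Proof.
  assert (Hrefl : forall (f : nat -> C) n,
    sum_n_m f 1 (n - 1) = sum_n_m (fun j => f (n - j)%nat) 1 (n - 1)).
  { intros f n. rewrite Csum_reflect. apply Csum_ext; intros. f_equal. lia. }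
  unfold triple_sum. rewrite Hrefl. apply Csum_ext; intros.
  rewrite Hrefl. apply Csum_ext; intros. apply Hrefl.
Qed.

End TripleSum.

Lemma pow_m1_mul_succ n : (-1) ^ n * (-1) ^ (n + 1) = -1.
Proof. rewrite <- pow_add. replace (n + (n + 1))%nat with (S (2 * n)) by lia. apply pow_1_odd. Qed.

Definition frac_point (h q j r : nat) : R := INR j / INR h + INR r / INR q.

Lemma frac_point_reflect h q j r :
  (0 < h)%nat -> (0 < q)%nat -> (j <= h)%nat -> (r <= q)%nat ->
  - frac_point h q (h - j) (q - r) = frac_point h q j r + IZR (-2).
Proof.
  intros Hh Hq Hj Hr. unfold frac_point. rewrite !minus_INR by assumption.
  assert (INR h <> 0) by (apply not_0_INR; lia).
  assert (INR q <> 0) by (apply not_0_INR; lia).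
  field. split; assumption.
Qed.

Definition conj_char_prod (phi chi psi : Z -> C) (j l r : nat) : C :=
  Cmult (Cmult (Cconj (phi (Z.of_nat j))) (Cconj (chi (Z.of_nat l)))) (Cconj (psi (Z.of_nat r))).

Definition gauss_prod (h k q : nat) (phi chi psi : Z -> C) : C :=
  Cmult (Cmult (gauss_sum h (char_conj phi)) (gauss_sum k (char_conj chi)))
        (gauss_sum q (char_conj psi)).

Section ThreeCharacters.

Variables (h k q : nat) (phi chi psi : Z -> C) (a b : nat).
Hypothesis Hphi : has_conductor (Z.of_nat h) phi.
Hypothesis Hchi : has_conductor (Z.of_nat k) chi.
Hypothesis Hpsi : has_conductor (Z.of_nat q) psi.

Lemma conj_char_prod_reflect j l r :
  (j <= h)%nat -> (l <= k)%nat -> (r <= q)%nat ->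
  conj_char_prod phi chi psi (h - j) (k - l) (q - r) =
  Cmult (Cconj (Cmult (Cmult (phi (-1)%Z) (chi (-1)%Z)) (psi (-1)%Z)))
        (conj_char_prod phi chi psi j l r).
Proof.
  intros Hj Hl Hr. unfold conj_char_prod.
  rewrite (char_reflect h phi), (char_reflect k chi), (char_reflect q psi), !Cmult_conj
    by assumption.
  ring.
Qed.

Lemma gauss_prod_mul_L_partial R0 :
  Cmult (gauss_prod h k q phi chi psi) (L_partial a b phi chi psi R0) =
  triple_sum h k q (fun j l r => Cmult (conj_char_prod phi chi psi j l r)
    (T_partial a b (frac_point h q j r) (frac_point k q l r) R0)).
Proof.
  unfold L_partial, T_partial. rewrite tri_sum_mult_l.
  transitivity (tri_sum R0 (fun m n => triple_sum h k q (fun j l r =>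
    Cmult (conj_char_prod phi chi psi j l r)
      (Cdiv (Cmult (e2pi (INR m * frac_point h q j r)) (e2pi (INR n * frac_point k q l r)))
            (RtoC (INR n ^ a * INR (m + n) ^ b)))))).
  - apply tri_sum_ext; intros m n.
    transitivity (Cmult (Cmult (Cmult
      (Cmult (gauss_sum h (char_conj phi)) (phi (Z.of_nat m)))
      (Cmult (gauss_sum k (char_conj chi)) (chi (Z.of_nat n))))
      (Cmult (gauss_sum q (char_conj psi)) (psi (Z.of_nat (m + n)))))
      (Cinv (RtoC (INR n ^ a * INR (m + n) ^ b)))).
    { unfold gauss_prod, Cdiv. ring. }
    rewrite !gauss_sum_conj_mul_char, triple_sum_prod by assumption.
    apply triple_sum_ext; intros j l r _ _ _.
    unfold conj_char_prod, frac_point, Cdiv.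
    rewrite !Rmult_plus_distr_l, !e2pi_add, plus_INR, Rmult_plus_distr_r, e2pi_add.
    ring.
  - rewrite tri_sum_triple_sum. apply triple_sum_ext; intros.
    symmetry. apply tri_sum_mult_l.
Qed.

Lemma gauss_prod_mul_L Lv T :
  is_L a b phi chi psi Lv ->
  (forall j l r, (1 <= j <= h - 1)%nat -> (1 <= l <= k - 1)%nat -> (1 <= r <= q - 1)%nat ->
    is_T a b (frac_point h q j r) (frac_point k q l r)
      (T (frac_point h q j r) (frac_point k q l r))) ->
  Cmult (gauss_prod h k q phi chi psi) Lv =
  triple_sum h k q (fun j l r => Cmult (conj_char_prod phi chi psi j l r)
    (T (frac_point h q j r) (frac_point k q l r))).
Proof.
  intros HL HT. apply (filterlim_C_unique (fun R0 =>
    Cmult (gauss_prod h k q phi chi psi) (L_partial a b phi chi psi R0))).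
  - now apply filterlim_Cmult_l.
  - eapply filterlim_ext; [intros R0; symmetry; apply gauss_prod_mul_L_partial |].
    apply filterlim_triple_sum; intros. apply filterlim_Cmult_l. now apply HT.
Qed.

(* After the substitution [(j, l, r) |-> (h - j, k - l, q - r)] the point
   [(-x, -y)] becomes [(x - 2, y - 2)], and [T] is 1-periodic in both variables. *)
Lemma triple_sum_T_opp T :
  (forall j l r, (1 <= j <= h - 1)%nat -> (1 <= l <= k - 1)%nat -> (1 <= r <= q - 1)%nat ->
    let x := frac_point h q j r in let y := frac_point k q l r in
    is_T a b x y (T x y) /\ is_T a b (- x) (- y) (T (- x) (- y))) ->
  triple_sum h k q (fun j l r => Cmult (conj_char_prod phi chi psi j l r)
    (T (- frac_point h q j r) (- frac_point k q l r))) =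
  Cmult (Cconj (Cmult (Cmult (phi (-1)%Z) (chi (-1)%Z)) (psi (-1)%Z)))
    (triple_sum h k q (fun j l r => Cmult (conj_char_prod phi chi psi j l r)
      (T (frac_point h q j r) (frac_point k q l r)))).
Proof.
  intros HT. rewrite triple_sum_reflect. unfold triple_sum. rewrite <- Csum_mult_l.
  apply Csum_ext; intros j Hj. rewrite <- Csum_mult_l.
  apply Csum_ext; intros l Hl. rewrite <- Csum_mult_l.
  apply Csum_ext; intros r Hr.
  rewrite conj_char_prod_reflect by lia.
  destruct (HT (h - j) (k - l) (q - r))%nat as [_ Hopp]; [lia.. |].
  destruct (HT j l r) as [Hxy _]; [lia.. |].
  rewrite (frac_point_reflect h q), (frac_point_reflect k q) in * by lia.
  rewrite (filterlim_C_unique _ _ _ Hopp (is_T_add_IZR _ _ _ _ _ _ _ Hxy)). ring.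
Qed.

End ThreeCharacters.

Theorem proposition2
  (h k q : nat) (phi chi psi : Z -> C) (a b : nat)
  (Hphi : has_conductor (Z.of_nat h) phi)
  (Hchi : has_conductor (Z.of_nat k) chi)
  (Hpsi : has_conductor (Z.of_nat q) psi)
  (Ha : (1 <= a)%nat) (Hb : (1 <= b)%nat)
  (Hsign : Cmult (Cmult (phi (-1)%Z) (chi (-1)%Z)) (psi (-1)%Z)
           = RtoC ((-1) ^ (a + b + 1)))
  (Lv : C) (T : R -> R -> C)
  (HL : is_L a b phi chi psi Lv)
  (HT : forall j l r : nat,
      (1 <= j <= h - 1)%nat -> (1 <= l <= k - 1)%nat -> (1 <= r <= q - 1)%nat ->
      let x := INR j / INR h + INR r / INR q in
      let y := INR l / INR k + INR r / INR q in
      is_T a b x y (T x y) /\ is_T a b (- x) (- y) (T (- x) (- y))) :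
  Cmult (Cmult (Cmult (gauss_sum h (char_conj phi)) (gauss_sum k (char_conj chi)))
               (gauss_sum q (char_conj psi))) Lv
  = sum_n_m (fun j : nat => sum_n_m (fun l : nat => sum_n_m (fun r : nat =>
      Cmult (Cmult (Cmult (Cconj (phi (Z.of_nat j))) (Cconj (chi (Z.of_nat l))))
                   (Cconj (psi (Z.of_nat r))))
            (U_of a b T (INR j / INR h + INR r / INR q) (INR l / INR k + INR r / INR q)))
      1 (q - 1)) 1 (k - 1)) 1 (h - 1).
Proof.
  change (Cmult (gauss_prod h k q phi chi psi) Lv =
    triple_sum h k q (fun j l r => Cmult (conj_char_prod phi chi psi j l r)
      (U_of a b T (frac_point h q j r) (frac_point k q l r)))).
  rewrite (gauss_prod_mul_L h k q phi chi psi a b Hphi Hchi Hpsi Lv T HL)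
    by (intros; now apply HT).
  set (s := (-1) ^ (a + b)).
  transitivity (triple_sum h k q (fun j l r => Cplus
    (Cmult (RtoC (/ 2)) (Cmult (conj_char_prod phi chi psi j l r)
      (T (frac_point h q j r) (frac_point k q l r))))
    (Cmult (Copp (Cmult (RtoC (/ 2)) (RtoC s))) (Cmult (conj_char_prod phi chi psi j l r)
      (T (- frac_point h q j r) (- frac_point k q l r)))))).
  2: { apply triple_sum_ext; intros. unfold U_of, Cminus. fold s. ring. }
  rewrite triple_sum_lin, (triple_sum_T_opp h k q phi chi psi a b Hphi Hchi Hpsi T HT),
    Hsign, Cconj_RtoC.
  set (S := triple_sum _ _ _ _).
  transitivity (Cmult (RtoC (/ 2 - / 2 * (s * (-1) ^ (a + b + 1)))) S).
  - unfold s. rewrite pow_m1_mul_succ. replace (/ 2 - / 2 * -1) with 1 by field.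
    now rewrite Cmult_1_l.
  - rewrite RtoC_minus, !RtoC_mult. ring.
Qed.
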